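(* Let $p$ be an odd prime and $m\in\mathbb Z_p$ with $m\not\equiv0\pmod p$. Then $$\sum_{k=0}^{p-1}\frac{\binom{2k}k^3}{(16m)^k(2k-1)^2}\equiv\Big(4-\frac{16}m\Big)\sum_{k=0}^{(p-1)/2}\frac{k\binom{2k}k^3}{(16m)^k}+\Big(1+\frac4m\Big)\sum_{k=0}^{(p-1)/2}\frac{\binom{2k}k^3}{(16m)^k}-\frac6m\sum_{k=0}^{(p-1)/2}\frac{\binom{2k}k^3}{(16m)^k(k+1)}\pmod{p^3}.$$
   Context: $\mathbb Z_p$ denotes the set of rational numbers whose denominator is not divisible by $p$; for $u,v\in\mathbb Z_p$, $u\equiv v\pmod{p^r}$ means $(u-v)/p^r\in\mathbb Z_p$. *)

From mathcomp Require Import all_boot all_order all_algebra.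
Set Implicit Arguments. Unset Strict Implicit. Unset Printing Implicit Defensive.
Import Order.TTheory GRing.Theory Num.Theory.
Local Open Scope ring_scope.

Definition in_Zp (p : nat) (x : rat) : bool := ~~ (p %| `|denq x|)%N.

Definition congr_pr (p r : nat) (u v : rat) : Prop :=
  in_Zp p ((u - v) / (p ^ r)%:R).

From mathcomp Require Import all_boot all_order all_algebra.
From mathcomp Require Import ring zify.

Set Implicit Arguments.
Unset Strict Implicit.
Unset Printing Implicit Defensive.

Import Order.TTheory GRing.Theory Num.Theory.
Local Open Scope ring_scope.

(* Write u_k = C(2k,k)^3 / (16m)^k and G(n) = (4n+1) u_n.  The recurrence
   (k+1) C(2k+2,k+1) = 2(2k+1) C(2k,k) makes the (k+1)-st summand on the left
   equal to the k-th summand on the right plus G(k+1) - G(k), so exactly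
   sum_(k <= n) left_k = sum_(k < n) right_k + G(n).
   Take n = (p+1)/2.  For n <= k < p we have k < p <= 2k, so p divides C(2k,k);
   hence p^3 divides G(n) and every left summand with n < k < p, whose
   denominator 2k - 1 lies strictly between p and 2p.  The only summand with a
   denominator divisible by p, at k = n, has been absorbed into G(n). *)

Section Zp.
Variable p : nat.
Hypothesis p_pr : prime p.

Lemma in_ZpP (x : rat) :
  in_Zp p x <-> exists a b : int, ~~ (p %| `|b|)%N /\ x = a%:~R / b%:~R.
Proof.
split=> [x_Zp | [a [b [b_unit x_eq]]]].
  by exists (numq x), (denq x); rewrite divq_num_den.
have num_den : numq x * b = a * denq x.
  apply: (@intr_inj rat); rewrite !rmorphM /= numqE x_eq.
  by field; rewrite intr_eq0; apply: contraNneq b_unit => ->.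
have : (`|denq x| %| `|numq x| * `|b|)%N by rewrite -abszM num_den abszM dvdn_mull.
rewrite Gauss_dvdr; last by rewrite coprime_sym coprime_num_den.
by move=> den_dvd; apply: contra b_unit => /dvdn_trans; apply.
Qed.

Lemma in_Zp_nat (n : nat) : in_Zp p n%:R.
Proof.
apply/in_ZpP; exists n, 1; rewrite divr1 pmulrn; split=> //.
by rewrite dvdn1; apply: contraTneq p_pr => ->.
Qed.

Lemma intr_neq0_of_ndvd (b : int) : ~~ (p %| `|b|)%N -> (b%:~R : rat) != 0.
Proof. by move=> b_unit; rewrite intr_eq0; apply: contraNneq b_unit => ->. Qed.

Lemma in_ZpM x y : in_Zp p x -> in_Zp p y -> in_Zp p (x * y).
Proof.
move=> /in_ZpP [a [b [b_unit ->]]] /in_ZpP [c [d [d_unit ->]]].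
apply/in_ZpP; exists (a * c), (b * d); split.
  by rewrite abszM Euclid_dvdM // negb_or b_unit.
by rewrite !rmorphM /=; field; rewrite !intr_neq0_of_ndvd.
Qed.

Lemma in_ZpD x y : in_Zp p x -> in_Zp p y -> in_Zp p (x + y).
Proof.
move=> /in_ZpP [a [b [b_unit ->]]] /in_ZpP [c [d [d_unit ->]]].
apply/in_ZpP; exists (a * d + c * b), (b * d); split.
  by rewrite abszM Euclid_dvdM // negb_or b_unit.
by rewrite !rmorphD !rmorphM /=; field; rewrite !intr_neq0_of_ndvd.
Qed.

Lemma in_ZpX x n : in_Zp p x -> in_Zp p (x ^+ n).
Proof.
move=> x_Zp; elim: n => [|n IH]; first exact: (in_Zp_nat 1).
by rewrite exprS in_ZpM.
Qed.

Lemma in_Zp_sum (I : Type) (r : seq I) (P : pred I) (F : I -> rat) :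
  (forall i, P i -> in_Zp p (F i)) -> in_Zp p (\sum_(i <- r | P i) F i).
Proof. by apply: (big_ind (in_Zp p)); [apply: (in_Zp_nat 0) | apply: in_ZpD]. Qed.

Lemma in_ZpV x : ~~ (p %| `|numq x|)%N -> in_Zp p x^-1.
Proof.
move=> num_unit; apply/in_ZpP; exists (denq x), (numq x); split=> //.
by rewrite -{1}[x]divq_num_den invf_div.
Qed.

Lemma in_Zp_natV n : ~~ (p %| n)%N -> in_Zp p n%:R^-1.
Proof. by move=> n_unit; apply: in_ZpV; rewrite pmulrn numq_int. Qed.

Lemma ndvd_numq_of_not_congr0 x :
  in_Zp p x -> ~ congr_pr p 1 x 0 -> ~~ (p %| `|numq x|)%N.
Proof.
move=> x_Zp x_ncongr0; apply/negP => p_dvd_num; apply: x_ncongr0.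
have /dvdzP [q num_eq] : (p%:Z %| numq x)%Z by rewrite dvdzE.
rewrite /congr_pr subr0 expn1; apply/in_ZpP; exists q, (denq x); split=> //.
have p_neq0 : p%:R != 0 :> rat by rewrite pnatr_eq0 -lt0n prime_gt0.
rewrite -{1}[x]divq_num_den num_eq rmorphM /= -pmulrn.
by field; rewrite p_neq0 intr_eq0 denq_neq0.
Qed.

Lemma in_Zp_dvd_cube (c : nat) x :
  (p %| c)%N -> in_Zp p x -> in_Zp p (c%:R ^+ 3 * x / (p ^ 3)%:R).
Proof.
move=> /dvdnP [q ->] x_Zp.
have p_neq0 : p%:R != 0 :> rat by rewrite pnatr_eq0 -lt0n prime_gt0.
have -> : (q * p)%:R ^+ 3 * x / (p ^ 3)%:R = q%:R ^+ 3 * x.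
  by rewrite natrM natrX; field.
by rewrite in_ZpM ?in_ZpX ?in_Zp_nat.
Qed.

End Zp.

Lemma prime_ndvd_fact p k : prime p -> (k < p)%N -> ~~ (p %| k`!)%N.
Proof.
move=> p_pr; elim: k => [|k IH] lt_kp; first by rewrite dvdn1; apply: contraTneq p_pr => ->.
by rewrite factS Euclid_dvdM // negb_or gtnNdvd // IH // ltnW.
Qed.

Lemma ndvdn_between d n : (d < n < d.*2)%N -> ~~ (d %| n)%N.
Proof.
move=> /andP [lt_dn lt_n2d].
by rewrite -(subnKC (ltnW lt_dn)) dvdn_addr // gtnNdvd; lia.
Qed.

Lemma prime_dvd_central_bin p k :
  prime p -> (k < p <= k.*2)%N -> (p %| 'C(k.*2, k))%N.
Proof.
move=> p_pr /andP [lt_kp le_p2k].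
have := bin_fact (leq_addr k k); rewrite addnK addnn => bin_eq.
have : (p %| (k.*2)`!)%N by rewrite dvdn_fact // prime_gt0.
by rewrite -bin_eq !Euclid_dvdM // (negPf (prime_ndvd_fact p_pr lt_kp)) !orbF.
Qed.

Lemma central_bin_succ k :
  ('C(k.+1.*2, k.+1) * k.+1 = 2 * (k.*2).+1 * 'C(k.*2, k))%N.
Proof.
have bin_even := mul_bin_diag (k.+1).*2 k.
have bin_odd := mul_bin_diag (k.*2).+1 k.
have bin_odd_sym : 'C((k.*2).+1, k.+1) = 'C((k.*2).+1, k).
  by rewrite -bin_sub; [congr 'C(_, _); lia | lia].
rewrite doubleS /= bin_odd_sym in bin_even bin_odd *.
apply/eqP; rewrite -(eqn_pmul2l (ltn0Sn k)); apply/eqP.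
rewrite mulnA -bin_even -mulnA [(_ * k.+1)%N]mulnC -bin_odd.
by move: ('C(_, _)) => c; nia.
Qed.

Lemma natr_double (R : pzSemiRingType) n : (n.*2)%:R = 2%:R * n%:R :> R.
Proof. by rewrite -mul2n natrM. Qed.

Section CentralBinomialSums.
Variables (R : numFieldType) (m : R).
Hypothesis m_neq0 : m != 0.

Local Notation u k := ('C(k.*2, k)%:R ^+ 3 / (16%:R * m) ^+ k).
Local Notation lhs_term k :=
  ('C(k.*2, k)%:R ^+ 3 / ((16%:R * m) ^+ k * ((k.*2)%:R - 1) ^+ 2)).
Local Notation rhs_term k :=
  ((4%:R - 16%:R / m) * (k%:R * 'C(k.*2, k)%:R ^+ 3 / (16%:R * m) ^+ k)
   + (1 + 4%:R / m) * ('C(k.*2, k)%:R ^+ 3 / (16%:R * m) ^+ k)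
   - 6%:R / m * ('C(k.*2, k)%:R ^+ 3 / ((16%:R * m) ^+ k * (k.+1)%:R))).

Lemma central_bin_succ_ratio k :
  'C(k.+1.*2, k.+1)%:R = 2%:R * (2%:R * k%:R + 1) / (k%:R + 1) * 'C(k.*2, k)%:R :> R.
Proof.
have := congr1 (fun n : nat => n%:R : R) (central_bin_succ k).
rewrite /= !natrM -[2%:R * k%:R]natr_double !natr1 => bin_eq.
by rewrite mulrAC -bin_eq mulfK ?pnatr_eq0.
Qed.

Lemma lhs_term_succ k :
  lhs_term k.+1 = rhs_term k + (4%:R * k.+1%:R + 1) * u k.+1 - (4%:R * k%:R + 1) * u k.
Proof.
rewrite central_bin_succ_ratio [(16%:R * m) ^+ k.+1]exprSr natr_double; field.
rewrite m_neq0 expf_neq0 ?mulf_neq0 ?pnatr_eq0 // natr1 pnatr_eq0 /=.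
by rewrite nat1r -natr_double subr_eq0 pnatr_eq1.
Qed.

Lemma sum_lhs_terms n :
  \sum_(k < n.+1) lhs_term k = \sum_(k < n) rhs_term k + (4%:R * n%:R + 1) * u n.
Proof.
elim: n => [|n IH].
  by rewrite big_ord1 big_ord0 /= double0 bin0 !expr0 sub0r sqrrN; field.
by rewrite big_ord_recr IH lhs_term_succ big_ord_recr /=; ring.
Qed.

Lemma sum_lhs_terms_split n N : (n < N)%N ->
  \sum_(k < N) lhs_term k =
    \sum_(k < n) rhs_term k + ((4%:R * n%:R + 1) * u n + \sum_(n.+1 <= k < N) lhs_term k).
Proof.
move=> lt_nN; rewrite -(big_mkord xpredT (fun k => lhs_term k)).
by rewrite (@big_cat_nat _ _ _ n.+1) // big_mkord sum_lhs_terms addrA.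
Qed.

Lemma sum_rhs_terms n :
  \sum_(k < n) rhs_term k =
    (4%:R - 16%:R / m) * (\sum_(k < n) (k%:R * 'C(k.*2, k)%:R ^+ 3 / (16%:R * m) ^+ k))
    + (1 + 4%:R / m) * (\sum_(k < n) u k)
    - 6%:R / m * (\sum_(k < n) ('C(k.*2, k)%:R ^+ 3 / ((16%:R * m) ^+ k * (k.+1)%:R))).
Proof. by rewrite sumrB big_split /= -!mulr_sumr. Qed.

End CentralBinomialSums.

Theorem theorem5p2 (p : nat) (m : rat) :
  prime p -> odd p ->
  in_Zp p m -> ~ congr_pr p 1 m 0 ->
  congr_pr p 3
    (\sum_(k < p) ('C(k.*2, k)%:R ^+ 3 /
        ((16%:R * m) ^+ k * ((k.*2)%:R - 1) ^+ 2)))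
    ((4%:R - 16%:R / m) *
       (\sum_(k < (p.-1)./2.+1) (k%:R * 'C(k.*2, k)%:R ^+ 3 / (16%:R * m) ^+ k))
     + (1 + 4%:R / m) *
       (\sum_(k < (p.-1)./2.+1) ('C(k.*2, k)%:R ^+ 3 / (16%:R * m) ^+ k))
     - 6%:R / m *
       (\sum_(k < (p.-1)./2.+1)
          ('C(k.*2, k)%:R ^+ 3 / ((16%:R * m) ^+ k * (k.+1)%:R)))).
Proof.
move=> p_pr p_odd m_Zp m_nonunit.
have m_unit := ndvd_numq_of_not_congr0 p_pr m_Zp m_nonunit.
have m_neq0 : m != 0 by apply: contraNneq m_unit => ->.
have p_ndvd16 : ~~ (p %| 16)%N.
  rewrite (_ : 16 = 2 ^ 4)%N // Euclid_dvdX // andbT dvdn_prime2 //.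
  by apply: contraTneq p_odd => ->.
have y_pow_Zp k : in_Zp p ((16%:R * m) ^+ k)^-1.
  by rewrite -exprVn in_ZpX // invfM in_ZpM ?in_Zp_natV ?in_ZpV.
set h := (p.-1)./2.
have p_eq : p = h.*2.+1 by rewrite /h; lia.
have lt_np : (h.+1 < p)%N by lia.
rewrite /congr_pr -sum_rhs_terms (sum_lhs_terms_split m_neq0 lt_np) addrC addKr.
rewrite mulrDl mulr_suml big_nat_cond in_ZpD ?in_Zp_sum //.
  rewrite mulrCA in_Zp_dvd_cube ?prime_dvd_central_bin //; first by lia.
  by rewrite in_ZpM // -natrM natr1 in_Zp_nat.
move=> k /andP [/andP [lt_hk lt_kp] _].
rewrite in_Zp_dvd_cube ?prime_dvd_central_bin //; first by lia.
rewrite invfM in_ZpM // -exprVn in_ZpX // -(natrB _ (_ : 1 <= k.*2)%N) //; last by lia.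
by rewrite in_Zp_natV // ndvdn_between //; lia.
Qed.
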